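(* Let $m\ge 2$ be an integer and let $\mathcal{A}\subset\mathbb{R}$ be a finite alphabet. Let $(X^{(j)}_i)_{i\ge 1,\,1\le j\le m}$ be independent and identically distributed random variables with values in $\mathcal{A}$. Let $S:\mathcal{A}^m\to[0,\infty)$ be a function that is not identically zero, is invariant under permutations of its $m$ arguments, satisfies $\sup_{x\in\mathcal{A}^m}S(x)<\infty$, and for which there is a constant $D>0$ such that $|S(x)-S(y)|\le D$ whenever $x,y\in\mathcal{A}^m$ differ in at most one coordinate. Let $\gamma^*$ and $\gamma^*(p_2,\dots,p_m)$ be as defined in the context. Let $\varepsilon>0$, let $\delta^*\in(0,\gamma^* )$, and let $\boldsymbol p^{(1)}=(p^{(1)}_1,\dots,p^{(1)}_m)$, $\boldsymbol p^{(2)}=(p^{(2)}_1,\dots,p^{(2)}_m)$ satisfy $0<p^{(1)}_j<1<p^{(2)}_j$ for $j=2,\dots,m$, and be such that $\gamma^*(p_2,\dots,p_m)\le\delta^*$ for every $(p_2,\dots,p_m)\in(0,\infty)^{m-1}$ with $p_j\notin[p^{(1)}_j,p^{(2)}_j]$ for at least one $j\in\{2,\dots,m\}$. Let $\eta\in(0,\gamma^*-\delta^* )$. Then there exists $N=N(\varepsilon,\eta,\boldsymbol p^{(1)},\boldsymbol p^{(2)})$ such that for every $n\ge N$, all positive integers $v,d$ with $n=vd$, and every $\vec r\in\overline{\mathcal R}_{n,\varepsilon}(\boldsymbol p^{(1)},\boldsymbol p^{(2)})$, $$\mathbb{E}\big(L(\vec r)-L_n\big)\le-\frac{\eta\varepsilon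 n}{m}.$$
   Context: Alignments and optimal score: for finite words $w^{(1)},\dots,w^{(m)}$ over $\mathcal{A}$ of lengths $\ell_1,\dots,\ell_m$, an alignment is a choice of an integer $k\ge 0$ and, for each $j$, indices $1\le \pi^{(j)}_1<\cdots<\pi^{(j)}_k\le \ell_j$; its score is $\sum_{i=1}^k S(w^{(1)}_{\pi^{(1)}_i},\dots,w^{(m)}_{\pi^{(m)}_i})$. The optimal score $L(w^{(1)};\dots;w^{(m)})$ is the maximum score over all alignments (empty words allowed). $L_n$ denotes the optimal score of the words $X^{(j)}_1\cdots X^{(j)}_n$, $j=1,\dots,m$, and $\gamma^*:=\lim_n\mathbb{E}(L_n)/n=\sup_n\mathbb{E}(L_n)/n$. For $p_2,\dots,p_m>0$, $\gamma^*(p_2,\dots,p_m):=\lim_{n\to\infty}\frac{m\,\mathbb{E}\big(L(X^{(1)}_1\cdots X^{(1)}_n;\,X^{(2)}_1\cdots X^{(2)}_{\lceil np_2\rceil};\cdots;X^{(m)}_1\cdots X^{(m)}_{\lceil np_m\rceil})\big)}{n(1+\sum_{i=2}^m p_i)}$ (the limit exists). For $n=vd$, a tuple $\vec r=(r^{(j)}_k)_{2\le j\le m,\,0\le k\le d}$ of integers with $0=r^{(j)}_0\le r^{(j)}_1\le\cdots\le r^{(j)}_{d-1}\le r^{(j)}_d=n$ for each $j$ defines $L(\vec r):=\sum_{k=1}^d L\big((X^{(1)}_i)_{i=v(k-1)+1}^{vk};\,(X^{(2)}_i)_{i=r^{(2)}_{k-1}+1}^{r^{(2)}_k};\cdots;(X^{(m)}_i)_{i=r^{(m)}_{k-1}+1}^{r^{(m)}_k}\big)$.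 $\overline{\mathcal R}_{n,\varepsilon}(\boldsymbol p^{(1)},\boldsymbol p^{(2)})$ is the set of all such (non-random) tuples $\vec r$ for which $\mathrm{Card}\{k\in\{1,\dots,d\}:\ vp^{(1)}_j\le r^{(j)}_k-r^{(j)}_{k-1}\le vp^{(2)}_j\ \text{for all } j=2,\dots,m\}<(1-\varepsilon)d$. *)

From HB Require Import structures.
From mathcomp Require Import all_boot all_order all_algebra all_fingroup.
From mathcomp Require Import all_classical all_reals all_analysis.
Set Implicit Arguments. Unset Strict Implicit. Unset Printing Implicit Defensive.
Import Order.TTheory GRing.Theory Num.Theory.
Import numFieldNormedType.Exports.
Local Open Scope classical_set_scope.
Local Open Scope ring_scope.

Section Defs.
Variable R : realType.
Variable m : nat.

Definition inA (A : seq R) (x : 'I_m -> R) := forall j, x j \in A.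

Definition differ_le1 (x y : 'I_m -> R) := (#|[pred j | x j != y j]| <= 1)%N.

(* An alignment of the words w j (j : 'I_m) of length k: for each j a strictly
   increasing sequence of k (0-based) positions of w j. *)
Definition is_alignment (w : 'I_m -> seq R) (k : nat) (pi : 'I_m -> seq nat) :=
  forall j, [/\ size (pi j) = k, sorted ltn (pi j) & all (fun i => i < size (w j))%N (pi j)].

Definition score (S : ('I_m -> R) -> R) (w : 'I_m -> seq R) (k : nat)
  (pi : 'I_m -> seq nat) : R :=
  \sum_(i < k) S (fun j => nth 0 (w j) (nth 0%N (pi j) i)).

Definition optscore (S : ('I_m -> R) -> R) (w : 'I_m -> seq R) : R :=
  sup [set x | exists k pi, is_alignment w k pi /\ x = score S w k pi].

Variables (dT : measure_display) (T : measurableType dT).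

(* X j i is X^{(j+1)}_{i+1}; word X j a b w = (X^{(j+1)}_i(w))_{i=a+1}^{b} *)
Definition word (X : 'I_m -> nat -> T -> R) (j : 'I_m) (a b : nat) (w : T) : seq R :=
  [seq X j i w | i <- iota a (b - a)].

Definition mutual_indep (P : probability T R) (I : eqType) (Y : I -> T -> R) :=
  forall (J : seq I) (B : I -> set R), uniq J -> (forall i, measurable (B i)) ->
    P (\bigcap_(i in [set` J]) (Y i @^-1` B i)) = (\prod_(i <- J) P (Y i @^-1` B i))%E.

Definition Ln (X : 'I_m -> nat -> T -> R) S (n : nat) (w : T) : R :=
  optscore S (fun j => word X j 0 n w).

Definition gamma_star (P : probability T R) X S : R :=
  limn ((fun n : nat => fine ('E_P[Ln X S n]) / n%:R) : R^nat).

Definition ceil_nat (x : R) : nat := `|Num.ceil x|%N.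

(* the score of X^{(1)}_1..X^{(1)}_n ; X^{(j)}_1..X^{(j)}_{ceil(n p_j)} (j >= 2);
   the first word is the one with index val j = 0, p 0 is ignored *)
Definition Lp (X : 'I_m -> nat -> T -> R) S (p : 'I_m -> R) (n : nat) (w : T) : R :=
  optscore S (fun j => if val j == 0%N then word X j 0 n w
                       else word X j 0 (ceil_nat (n%:R * p j)) w).

Definition gamma_p (P : probability T R) X S (p : 'I_m -> R) : R :=
  limn ((fun n : nat => m%:R * fine ('E_P[Lp X S p n]) /
                        (n%:R * (1 + \sum_(j < m | (0 < val j)%N) p j))) : R^nat).

(* r j k = r^{(j+1)}_k ; component j = 0 is ignored *)
Definition valid_r (n d : nat) (r : 'I_m -> nat -> nat) :=
  forall j : 'I_m, (0 < val j)%N ->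
    [/\ r j 0%N = 0%N, r j d = n & forall k, (k < d)%N -> (r j k <= r j k.+1)%N].

(* summand k here is the (k+1)-th summand of the paper *)
Definition Lr (X : 'I_m -> nat -> T -> R) S (v d : nat) (r : 'I_m -> nat -> nat)
  (w : T) : R :=
  \sum_(k < d) optscore S (fun j => if val j == 0%N then word X j (v * k) (v * k.+1) w
                                    else word X j (r j k) (r j k.+1) w).

Definition in_Rbar (n v d : nat) (eps : R) (p1 p2 : 'I_m -> R) (r : 'I_m -> nat -> nat) :=
  valid_r n d r /\
  (count (fun k => [forall j : 'I_m, (0 < val j)%N ==>
           ((v%:R * p1 j <= (r j k.+1)%:R - (r j k)%:R) &&
            ((r j k.+1)%:R - (r j k)%:R <= v%:R * p2 j))]) (iota 0 d))%:R
    < (1 - eps) * d%:R.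

End Defs.

From HB Require Import structures.
From mathcomp Require Import all_boot all_order all_algebra all_fingroup.
From mathcomp Require Import all_classical all_reals all_analysis.
From mathcomp Require Import ring lra.
Set Implicit Arguments. Unset Strict Implicit. Unset Printing Implicit Defensive.
Import Order.TTheory GRing.Theory Num.Theory.
Import numFieldNormedType.Exports.
Local Open Scope classical_set_scope.
Local Open Scope ring_scope.

(* The expected optimal score [mean_score c] of independent words of lengths
   [c : 'I_m -> nat] depends only on [c] because the letters are i.i.d., is
   invariant under permutations of [c] because [S] is symmetric, and is
   superadditive because optimal alignments of consecutive blocks concatenate.
   Summing superadditivity over the [m] cyclic rotations of [c] and using
   Fekete's lemma gives [m * mean_score c <= gamma* (c_1 + ... + c_m)]; if some
   ratio [c_j / c_1] leaves [[p1_j, p2_j]], the same holds with [gamma*]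
   replaced by [gamma*(c_2/c_1, ..., c_m/c_1) <= delta].  In [L(r)] more than
   [eps d] blocks are of the second kind and each has total length at least
   [v], so [m E L(r) <= gamma* m n - (gamma* - delta) eps n], while
   [E L_n >= (gamma* - xi) n] for any [xi > 0] once [n] is large. *)

Section OptimalScore.
Variables (R : realType) (m : nat) (A : seq R) (S : ('I_m -> R) -> R).

Definition words_over (w : 'I_m -> seq R) := forall j, all (fun x => x \in A) (w j).

Lemma words_over_cat (w1 w2 : 'I_m -> seq R) :
  words_over w1 -> words_over w2 -> words_over (fun j => w1 j ++ w2 j).
Proof. by move=> h1 h2 j; rewrite all_cat h1 h2. Qed.

Lemma alignment_nil (w : 'I_m -> seq R) : is_alignment w 0 (fun _ => [::]).
Proof. by []. Qed.

Lemma alignment_size_le (w : 'I_m -> seq R) k pi j :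
  is_alignment w k pi -> (k <= size (w j))%N.
Proof.
case/(_ j) => <- so al; rewrite -(size_iota 0 (size (w j))).
apply: uniq_leq_size; first exact: (sorted_uniq ltn_trans ltnn so).
by move=> x /(allP al) xw; rewrite mem_iota.
Qed.

Lemma alignment_column_inA (w : 'I_m -> seq R) k pi i :
  words_over w -> is_alignment w k pi -> (i < k)%N ->
  inA A (fun j => nth 0 (w j) (nth 0%N (pi j) i)).
Proof.
move=> wA H ik j; case: (H j) => sz _ al.
by apply: (allP (wA j)); apply: mem_nth; apply: (allP al); apply: mem_nth; rewrite sz.
Qed.

Lemma sorted_cat_shift (s1 s2 : seq nat) c : sorted ltn s1 -> sorted ltn s2 ->
  all (fun i => (i < c)%N) s1 -> sorted ltn (s1 ++ map (addn c) s2).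
Proof.
move=> so1 so2 al1; rewrite sorted_pairwise; last exact: ltn_trans.
rewrite pairwise_cat pairwise_map; apply/and3P; split.
- apply/allrelP => x y xs1 /mapP [z _ ->].
  exact: leq_trans (allP al1 x xs1) (leq_addr _ _).
- by rewrite -sorted_pairwise //; exact: ltn_trans.
- move: so2; rewrite sorted_pairwise; last exact: ltn_trans.
  by apply: sub_pairwise => a b /=; rewrite ltn_add2l.
Qed.

Lemma alignment_cat (w1 w2 : 'I_m -> seq R) k1 pi1 k2 pi2 :
  is_alignment w1 k1 pi1 -> is_alignment w2 k2 pi2 ->
  is_alignment (fun j => w1 j ++ w2 j) (k1 + k2)
    (fun j => pi1 j ++ map (addn (size (w1 j))) (pi2 j)).
Proof.
move=> H1 H2 j; case: (H1 j) => s1 so1 al1; case: (H2 j) => s2 so2 al2; split.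
- by rewrite size_cat size_map s1 s2.
- exact: sorted_cat_shift.
- rewrite all_cat size_cat; apply/andP; split.
    by apply/allP => x /(allP al1) xs; rewrite ltn_addr.
  by apply/allP => x /mapP [z /(allP al2) zs ->]; rewrite ltn_add2l.
Qed.

Lemma score_cat (w1 w2 : 'I_m -> seq R) k1 pi1 k2 pi2 :
  is_alignment w1 k1 pi1 -> is_alignment w2 k2 pi2 ->
  score S (fun j => w1 j ++ w2 j) (k1 + k2)
    (fun j => pi1 j ++ map (addn (size (w1 j))) (pi2 j)) =
  score S w1 k1 pi1 + score S w2 k2 pi2.
Proof.
move=> H1 H2; rewrite /score big_split_ord /=.
congr (_ + _); apply: eq_bigr => i _; congr S; apply: funext => j;
  case: (H1 j) => s1 _ al1; case: (H2 j) => s2 _ _.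
  have hx : (nth 0%N (pi1 j) i < size (w1 j))%N.
    by apply: (allP al1); apply: mem_nth; rewrite s1.
  by rewrite [nth 0%N _ _]nth_cat s1 ltn_ord nth_cat hx.
rewrite [nth 0%N _ _]nth_cat s1 /= ltnNge leq_addr /= addKn (nth_map 0%N) ?s2 //.
by rewrite nth_cat ltnNge leq_addr /= addKn.
Qed.

Lemma optscore_le (w : 'I_m -> seq R) y :
  (forall k pi, is_alignment w k pi -> score S w k pi <= y) -> optscore S w <= y.
Proof.
move=> H; apply: ge_sup => [|x [k [pi [Hk ->]]]]; last exact: H.
by exists 0, 0%N, (fun _ => [::]); rewrite /score big_ord0.
Qed.

Section BoundedScore.
Variable M : R.
Hypotheses (m_gt0 : (0 < m)%N) (M_ge0 : 0 <= M).
Hypothesis S_le : forall x, inA A x -> S x <= M.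

Lemma score_le_size (w : 'I_m -> seq R) k pi j :
  words_over w -> is_alignment w k pi -> score S w k pi <= (size (w j))%:R * M.
Proof.
move=> wA H; apply: (@le_trans _ _ (\sum_(i < k) M)).
  by apply: ler_sum => i _; apply: S_le; exact: alignment_column_inA wA H (ltn_ord i).
by rewrite sumr_const card_ord -[M *+ k]mulr_natl ler_wpM2r // ler_nat (alignment_size_le j H).
Qed.

Lemma score_le_optscore (w : 'I_m -> seq R) k pi :
  words_over w -> is_alignment w k pi -> score S w k pi <= optscore S w.
Proof.
move=> wA H; apply: sup_upper_bound; last by exists k, pi.
split; first by exists (score S w k pi), k, pi.
exists ((size (w (Ordinal m_gt0)))%:R * M) => x [k' [pi' [H' ->]]].
exact: score_le_size wA H'.
Qed.

Lemma optscore_ge0 (w : 'I_m -> seq R) : words_over w -> 0 <= optscore S w.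
Proof.
by move=> wA; have := score_le_optscore wA (alignment_nil w); rewrite /score big_ord0.
Qed.

Lemma optscore_le_size (w : 'I_m -> seq R) j :
  words_over w -> optscore S w <= (size (w j))%:R * M.
Proof. by move=> wA; apply: optscore_le => k pi; exact: score_le_size. Qed.

Lemma optscore_cat (w1 w2 : 'I_m -> seq R) : words_over w1 -> words_over w2 ->
  optscore S w1 + optscore S w2 <= optscore S (fun j => w1 j ++ w2 j).
Proof.
move=> h1 h2; set W := fun j => w1 j ++ w2 j.
have sum_le k1 pi1 k2 pi2 : is_alignment w1 k1 pi1 -> is_alignment w2 k2 pi2 ->
    score S w1 k1 pi1 <= optscore S W - score S w2 k2 pi2.
  move=> H1 H2; rewrite lerBrDr -(score_cat H1 H2).
  exact: score_le_optscore (words_over_cat h1 h2) (alignment_cat H1 H2).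
rewrite -lerBrDl; apply: optscore_le => k2 pi2 H2; rewrite lerBrDl -lerBrDr.
by apply: optscore_le => k1 pi1 H1; exact: sum_le.
Qed.

Hypothesis S_perm : forall (s : {perm 'I_m}) x, inA A x -> S (fun j => x (s j)) = S x.

Lemma optscore_perm_le (s : {perm 'I_m}) (w : 'I_m -> seq R) : words_over w ->
  optscore S (fun j => w (s j)) <= optscore S w.
Proof.
move=> wA; apply: optscore_le => k pi H.
have H' : is_alignment w k (fun j => pi (s^-1 j)%g).
  by move=> j; case: (H (s^-1 j)%g); rewrite permKV.
apply: le_trans (score_le_optscore wA H'); rewrite le_eqVlt; apply/orP; left.
apply/eqP; apply: eq_bigr => i _.
rewrite -(S_perm s (alignment_column_inA wA H' (ltn_ord i))).
by congr S; apply: funext => j; rewrite permK.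
Qed.

Lemma optscore_perm (s : {perm 'I_m}) (w : 'I_m -> seq R) : words_over w ->
  optscore S (fun j => w (s j)) = optscore S w.
Proof.
move=> wA; apply/le_anti; rewrite optscore_perm_le //=.
have := optscore_perm_le (s^-1)%g (fun j => wA (s j)).
by under eq_fun do rewrite permKV.
Qed.

End BoundedScore.
End OptimalScore.

Section GrowthRate.
Variable R : realType.

Definition growth_rate (a : nat -> R) (G : R) :=
  (forall n, a n <= G * n%:R) /\
  (forall e, 0 < e -> exists N, forall n, (N <= n)%N -> (G - e) * n%:R <= a n).

Lemma exists_nat_gt (x : R) : exists N : nat, x < N%:R.
Proof.
exists (Num.bound `|x|); apply: le_lt_trans (archi_boundP (normr_ge0 x)).
exact: ler_norm.
Qed.

Section Superadditive.
Variable a : nat -> R.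
Hypotheses (a_ge0 : forall n, 0 <= a n) (aD : forall n n', a n + a n' <= a (n + n')).

Lemma superadditive_mulr q k : q%:R * a k <= a (q * k).
Proof.
elim: q => [|q IH]; first by rewrite mul0r mul0n a_ge0.
by rewrite mulSn -natr1 mulrDl mul1r addrC; apply: le_trans (aD _ _); rewrite lerD2l.
Qed.

Lemma fekete C : (forall n, a n <= C * n%:R) -> exists G, growth_rate a G.
Proof.
move=> aC; set E := range (fun n => a n.+1 / n.+1%:R).
have hasE : has_sup E.
  split; first by exists (a 1 / 1%:R), 0%N.
  by exists C => x [n _ <-]; rewrite ler_pdivrMr ?ltr0n.
set G := sup E; have aG n : a n.+1 / n.+1%:R <= G by apply: (sup_upper_bound hasE); exists n.
exists G; split=> [[|n]|e e0]; first by have := aC 0%N; rewrite !mulr0n !mulr0.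
  by have := aG n; rewrite ler_pdivrMr ?ltr0n.
have [_ [k _ <-] Hk] := @sup_adherent _ E (e / 2) (divr_gt0 e0 (ltr0Sn _ 1)) hasE.
set K := k.+1 in Hk *; have K0 : 0 < (K%:R : R) by rewrite ltr0n.
have aK : (G - e / 2) * K%:R < a K by rewrite -ltr_pdivlMr.
have [N HN] := exists_nat_gt (K%:R * G / (e / 2)).
exists N => n Nn; have [Ge | Ge] := lerP (G - e / 2) 0.
  by apply: le_trans (a_ge0 n); apply: mulr_le0_ge0; [lra | exact: ler0n].
have an : (n %/ K)%:R * a K <= a n.
  rewrite [in leRHS](divn_eq n K); apply: le_trans (superadditive_mulr _ _) _.
  by apply: le_trans (aD _ _); rewrite lerDl a_ge0.
have nR : (n%:R : R) <= (n %/ K)%:R * K%:R + K%:R.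
  by rewrite -natrM -natrD ler_nat {1}(divn_eq n K) leq_add2l ltnW // ltn_mod.
have NR : (N%:R : R) <= n%:R by rewrite ler_nat.
have HN' : K%:R * G < N%:R * (e / 2) by rewrite -ltr_pdivrMr ?divr_gt0.
have q0 : 0 <= ((n %/ K)%:R : R) by rewrite ler0n.
apply: le_trans an; apply: le_trans (ler_wpM2l q0 (ltW aK)); nra.
Qed.

End Superadditive.

Lemma growth_rate_floor_cvg (g f : nat -> R) G v : (0 < v)%N ->
  (forall t, 0 <= g t) -> growth_rate g G ->
  (forall n, g (n %/ v)%N <= f n <= g (n %/ v)%N.+1) ->
  (fun n => f n / n%:R) @ \oo --> G / v%:R.
Proof.
move=> v0 g0 [gG gL] fg; apply/cvgrPdist_le => e e0.
have vr0 : 0 < (v%:R : R) by rewrite ltr0n.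
set y := G / v%:R; have Gy : G = y * v%:R by rewrite /y divfK // gt_eqF.
have y0 : 0 <= y by rewrite /y divr_ge0 ?ler0n // -(mulr1 G); apply: le_trans (gG 1%N).
have [T0 HT0] := gL _ (divr_gt0 (mulr_gt0 e0 vr0) (ltr0Sn _ 1)).
have [N1 HN1] := exists_nat_gt (G / (e / 2)).
near=> n; set t := (n %/ v)%N.
have n1 : (maxn N1 1 <= n)%N by near: n; exists (maxn N1 1).
have tT : (T0 <= t)%N by rewrite /t leq_divRL //; near: n; exists (T0 * v)%N.
move: n1; rewrite geq_max => /andP [N1n n1].
have tv : t%:R * v%:R <= n%:R :> R by rewrite -natrM ler_nat leq_trunc_div.
have nlt : n%:R < (t%:R + 1) * v%:R :> R by rewrite natr1 -natrM ltr_nat ltn_ceil.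
have nr0 : 0 < (n%:R : R) by rewrite ltr0n.
have Gn : G < n%:R * (e / 2).
  by rewrite -ltr_pdivrMr ?divr_gt0 //; apply: lt_le_trans HN1 _; rewrite ler_nat.
have /andP [f1 f2] := fg n; have gt1 := gG t.+1; rewrite -natr1 in gt1.
have gt := HT0 t tT; have g0t := g0 t; have t0 : 0 <= (t%:R : R) by rewrite ler0n.
have up : f n <= (e + y) * n%:R by apply: le_trans f2 _; apply: le_trans gt1 _; rewrite Gy; nra.
have low : (- e + y) * n%:R <= f n.
  have [Ge | Ge] := lerP (G - e * v%:R / 2) 0.
    apply: le_trans (le_trans (g0 _) f1); have : y <= e / 2 by rewrite Gy in Ge; nra.
    nra.
  by apply: le_trans f1; apply: le_trans gt; rewrite Gy in Ge Gn *; nra.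
rewrite distrC ler_norml; apply/andP; split.
  by rewrite lerBrDr ler_pdivlMr.
by rewrite lerBlDr ler_pdivrMr.
Unshelve. all: end_near.
Qed.

Lemma leq_ceil_nat k (x : R) : k%:R <= x -> (k <= ceil_nat x)%N.
Proof.
move=> kx; have : (k%:Z <= Num.ceil x)%R.
  by rewrite -(@intrKceil R k%:Z); apply: le_ceil; rewrite -pmulrn.
by rewrite /ceil_nat; case: (Num.ceil x) => n //=; rewrite lez_nat.
Qed.

Lemma ceil_nat_leq k (x : R) : 0 <= x -> x <= k%:R -> (ceil_nat x <= k)%N.
Proof.
move=> x0 xk; have : (Num.ceil x <= k%:Z)%R by rewrite ceil_le_int -pmulrn.
have : (0 <= Num.ceil x)%R by rewrite ceil_ge0 (lt_le_trans _ x0) ?ltrN10.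
by rewrite /ceil_nat; case: (Num.ceil x) => n //=; rewrite lez_nat.
Qed.

End GrowthRate.

Lemma ler_sum_two_rates (R : realFieldType) (I : finType) (B : pred I) (x t : I -> R) (g dl : R) :
  (forall k, x k <= g * t k) -> (forall k, B k -> x k <= dl * t k) ->
  \sum_k x k <= g * \sum_k t k - (g - dl) * \sum_(k | B k) t k.
Proof.
move=> xg xdl; rewrite (bigID B) [X in g * X](bigID B) /= mulrDr.
have h1 : \sum_(k | B k) x k <= dl * \sum_(k | B k) t k by rewrite mulr_sumr; apply: ler_sum.
have h2 : \sum_(k | ~~ B k) x k <= g * \sum_(k | ~~ B k) t k.
  by rewrite mulr_sumr; apply: ler_sum.
lra.
Qed.

Lemma fine_expectation_le (R : realType) (dT : measure_display) (T : measurableType dT)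
  (P : probability T R) (f g : T -> R) :
  f \in Lfun P 1 -> g \in Lfun P 1 -> (forall w, f w <= g w) ->
  fine 'E_P[f] <= fine 'E_P[g].
Proof.
move=> Lf Lg fg; have : (0 <= 'E_P[g \- f])%E.
  by apply: expectation_ge0 => w; rewrite subr_ge0.
rewrite expectationB // -(fineK (expectation_fin_num Lf)).
by rewrite -(fineK (expectation_fin_num Lg)) -EFinB lee_fin subr_ge0.
Qed.

Section RandomWords.
Variables (R : realType) (dT : measure_display) (T : measurableType dT).
Variables (P : probability T R) (m : nat) (A : seq R) (X : 'I_m -> nat -> T -> R).
Hypothesis m_gt0 : (0 < m)%N.
Hypotheses (X_meas : forall j i, measurable_fun setT (X j i)) (X_A : forall j i w, X j i w \in A).
Hypothesis X_indep : mutual_indep P (fun ji : 'I_m * nat => X ji.1 ji.2).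
Hypothesis X_ident : forall j i j' i' (B : set R), measurable B ->
  P (X j i @^-1` B) = P (X j' i' @^-1` B).

Let i0 : 'I_m := Ordinal m_gt0.

Fixpoint words_of_size (n : nat) : seq (seq R) :=
  if n is n'.+1 then [seq a :: s | a <- undup A, s <- words_of_size n'] else [:: [::]].

Lemma mem_words_of_size n s :
  (s \in words_of_size n) = (size s == n) && all (fun a => a \in A) s.
Proof.
elim: n s => [|n IH] [|a s] //=; first by apply/allpairsP => [[[b t] /= [_ _]]].
apply/allpairsP/idP => [[[b t]] /= [bA tn [-> ->]] | ].
  by move: bA tn; rewrite mem_undup IH eqSS => -> /andP[-> ->].
rewrite eqSS => /andP [sn /andP [aA sA]]; exists (a, s).
by rewrite /= mem_undup aA IH sn sA.
Qed.

Lemma uniq_words_of_size n : uniq (words_of_size n).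
Proof.
elim: n => //= n IH; apply: allpairs_uniq => //; first exact: undup_uniq.
by move=> [a s] [b t] _ _ /= [-> ->].
Qed.

Definition sample (J : seq ('I_m * nat)) (w : T) : seq R := [seq X ji.1 ji.2 w | ji <- J].

Lemma sample_words_of_size J w : sample J w \in words_of_size (size J).
Proof.
rewrite mem_words_of_size size_map eqxx /=.
by apply/allP => a /mapP [ji _ ->]; exact: X_A.
Qed.

Lemma measurable_sample_eq J x : measurable [set w | sample J w = x].
Proof.
elim: J x => [|ji J IH] [|a x].
- by rewrite [X in measurable X](_ : _ = setT) //; apply/seteqP; split.
- by rewrite [X in measurable X](_ : _ = set0) //; apply/seteqP; split.
- by rewrite [X in measurable X](_ : _ = set0) //; apply/seteqP; split.
rewrite [X in measurable X](_ : _ = X ji.1 ji.2 @^-1` [set a] `&` [set w | sample J w = x]).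
  apply: measurableI; last exact: IH.
  by have := X_meas ji.1 ji.2 measurableT (measurable_set1 a); rewrite setTI.
by apply/seteqP; split => w /=; case=> -> ->.
Qed.

Lemma sample_eq_bigcap J x : uniq J -> size x = size J ->
  [set w | sample J w = x] = \bigcap_(i in [set` J])
     ((fun ji : 'I_m * nat => X ji.1 ji.2) i @^-1` [set nth 0 x (index i J)]).
Proof.
move=> uJ sx; apply/seteqP; split => w /=.
  by move=> <- i /= iJ; rewrite (nth_map (i0, 0%N)) ?index_mem // nth_index.
move=> H; apply: (@eq_from_nth _ 0); rewrite size_map // => k kJ.
rewrite (nth_map (i0, 0%N)) //.
by have := H (nth (i0, 0%N) J k) (mem_nth _ kJ); rewrite /= index_uniq // -sx.
Qed.

(* [X i0 0] stands for any letter, all being identically distributed. *)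
Lemma prob_sample_eq J x : uniq J -> size x = size J ->
  P [set w | sample J w = x] = (\prod_(a <- x) P (X i0 0%N @^-1` [set a]))%E.
Proof.
move=> uJ sx; rewrite sample_eq_bigcap // X_indep //.
have ex : x = map (fun i => nth 0 x (index i J)) J.
  apply: (@eq_from_nth _ 0); rewrite ?size_map // => k kx.
  by rewrite (nth_map (i0, 0%N)) -?sx // index_uniq // -sx.
rewrite [in RHS]ex big_map; apply: eq_bigr => i _.
by apply: X_ident; exact: measurable_set1.
Qed.

Section SampleFun.
Variables (J : seq ('I_m * nat)) (G : seq R -> R).

Let indic_scale x (w : T) := \1_[set w | sample J w = x] w * G x.

Let Lfun_indic_scale x : indic_scale x \in Lfun P 1.
Proof.
apply: (@Lfun_scale _ _ _ P _ (G x) 1) => //; apply/Lfun1_integrable.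
exact: integrable_indic (measurable_sample_eq J x).
Qed.

Let sample_fun_decomp :
  (fun w => G (sample J w)) = \sum_(x <- words_of_size (size J)) indic_scale x.
Proof.
rewrite fct_sumE; apply: funext => w.
rewrite (bigD1_seq (sample J w)) ?uniq_words_of_size ?sample_words_of_size //=.
rewrite /indic_scale indicE mem_set // mul1r big1 ?addr0 // => x xne.
by rewrite indicE memNset ?mul0r //= => hx; move: xne; rewrite hx eqxx.
Qed.

Lemma Lfun_sample_fun : (fun w => G (sample J w)) \in Lfun P 1.
Proof.
by rewrite sample_fun_decomp big_seq; apply: rpred_sum => x _; exact: Lfun_indic_scale.
Qed.

Lemma expectation_sample_fun : uniq J ->
  ('E_P[fun w => G (sample J w)] = \sum_(x <- words_of_size (size J))
     (G x)%:E * \prod_(a <- x) P (X i0 0%N @^-1` [set a]))%E.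
Proof.
move=> uJ; rewrite sample_fun_decomp -(big_map indic_scale xpredT id) expectation_sum.
  rewrite big_map big_seq [RHS]big_seq; apply: eq_bigr => x.
  rewrite mem_words_of_size => /andP [/eqP sx _].
  rewrite /indic_scale (_ : (fun w => _) = G x \o* \1_[set w | sample J w = x]) //.
  rewrite expectationZl; last exact/Lfun1_integrable/integrable_indic/measurable_sample_eq.
  by rewrite expectation_indic ?prob_sample_eq //; exact: measurable_sample_eq.
by move=> Xi /mapP [x _ ->]; exact: Lfun_indic_scale.
Qed.

End SampleFun.

Lemma expectation_sample_fun_size (J J' : seq ('I_m * nat)) (G : seq R -> R) :
  uniq J -> uniq J' -> size J = size J' ->
  ('E_P[fun w => G (sample J w)] = 'E_P[fun w => G (sample J' w)])%E.
Proof. by move=> uJ uJ' JJ'; rewrite !expectation_sample_fun // JJ'. Qed.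

Section MeanScore.
Variables (S : ('I_m -> R) -> R) (M : R).
Hypotheses (M_ge0 : 0 <= M) (S_le : forall x, inA A x -> S x <= M).
Hypothesis S_perm : forall (s : {perm 'I_m}) x, inA A x -> S (fun j => x (s j)) = S x.

Lemma words_over_word (f : 'I_m -> 'I_m) (a b : 'I_m -> nat) w :
  words_over A (fun j => word X (f j) (a j) (b j) w).
Proof. by move=> j; apply/allP => x /mapP [i _ ->]; exact: X_A. Qed.

Lemma word_cat j a b d w : (a <= b <= d)%N ->
  word X j a b w ++ word X j b d w = word X j a d w.
Proof.
case/andP=> ab bd; rewrite /word -map_cat.
have -> : (d - a = (b - a) + (d - b))%N by rewrite addnC addnBA // subnK.
by rewrite iotaD subnKC.
Qed.

Definition block_indices (tau : 'I_m -> 'I_m) (a c : 'I_m -> nat) : seq ('I_m * nat) :=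
  [seq (tau j, a j + i)%N | j <- enum 'I_m, i <- iota 0 (c j)].

Definition split_optscore (c : 'I_m -> nat) (s : seq R) : R :=
  optscore S (fun j => nth [::] (reshape [seq c j | j <- enum 'I_m] s) j).

(* Through this flat encoding, blocks at different positions or of permuted words
   have the same expected score. *)
Lemma optscore_word_sample (tau : 'I_m -> 'I_m) (a c : 'I_m -> nat) w :
  optscore S (fun j => word X (tau j) (a j) (a j + c j) w) =
  split_optscore c (sample (block_indices tau a c) w).
Proof.
rewrite /split_optscore; congr optscore; apply: funext => j.
set W := fun j => word X (tau j) (a j) (a j + c j) w.
have -> : sample (block_indices tau a c) w = flatten [seq W j | j <- enum 'I_m].
  rewrite /sample /block_indices /allpairs_dep map_flatten -map_comp.
  congr flatten; apply: eq_map => k /=; rewrite /W /word addKn -(addn0 (a k)) iotaDl.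
  by rewrite addn0 -!map_comp.
have -> : [seq c j | j <- enum 'I_m] = shape [seq W j | j <- enum 'I_m].
  by rewrite /shape -map_comp; apply: eq_map => k /=; rewrite /W size_map size_iota addKn.
by rewrite flattenK (nth_map j) ?size_enum_ord // nth_ord_enum.
Qed.

Lemma uniq_block_indices (tau : 'I_m -> 'I_m) (a c : 'I_m -> nat) :
  injective tau -> uniq (block_indices tau a c).
Proof.
move=> tau_inj; apply: allpairs_uniq_dep => [||[k i] [k' i'] _ _ /= [/tau_inj e]].
- exact: enum_uniq.
- by move=> k _; exact: iota_uniq.
by move: i'; rewrite -e => i' /addnI ->.
Qed.

Lemma size_block_indices (tau tau' : 'I_m -> 'I_m) (a a' c : 'I_m -> nat) :
  size (block_indices tau a c) = size (block_indices tau' a' c).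
Proof. by rewrite !size_allpairs_dep. Qed.

Definition block_score (a c : 'I_m -> nat) (w : T) : R :=
  optscore S (fun j => word X j (a j) (a j + c j) w).

Definition mean_score (c : 'I_m -> nat) : R := fine 'E_P[block_score (fun _ => 0%N) c].

Lemma block_score_sample a c :
  block_score a c = (fun w => split_optscore c (sample (block_indices id a c) w)).
Proof. by apply: funext => w; rewrite -optscore_word_sample. Qed.

Lemma Lfun_block_score a c : block_score a c \in Lfun P 1.
Proof. by rewrite block_score_sample; exact: Lfun_sample_fun. Qed.

Lemma expectation_block_score a c : ('E_P[block_score a c] = (mean_score c)%:E)%E.
Proof.
rewrite /mean_score fineK; last exact/expectation_fin_num/Lfun_block_score.
rewrite !block_score_sample; apply: expectation_sample_fun_size => //.
- exact: uniq_block_indices.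
- exact: uniq_block_indices.
- exact: size_block_indices.
Qed.

Lemma mean_score_perm (s : {perm 'I_m}) c : mean_score (fun j => c (s j)) = mean_score c.
Proof.
rewrite /mean_score [in LHS]block_score_sample.
have -> : block_score (fun _ => 0%N) c = (fun w => split_optscore (fun j => c (s j))
    (sample (block_indices s (fun _ => 0%N) (fun j => c (s j))) w)).
  apply: funext => w; rewrite -optscore_word_sample /block_score.
  symmetry; exact: (optscore_perm m_gt0 M_ge0 S_le S_perm s (words_over_word id _ _ w)).
congr fine; apply: expectation_sample_fun_size => //.
- exact: uniq_block_indices.
- exact: uniq_block_indices (@perm_inj _ s).
- exact: size_block_indices.
Qed.

Lemma mean_score_ge0 c : 0 <= mean_score c.
Proof.
apply/fine_ge0/expectation_ge0 => w.
rewrite /block_score; apply: (optscore_ge0 m_gt0 M_ge0 S_le); exact: words_over_word.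
Qed.

Lemma mean_score_le_size c j : mean_score c <= (c j)%:R * M.
Proof.
rewrite -[leRHS]/(fine ((c j)%:R * M)%:E) -(expectation_cst P).
apply: fine_expectation_le (Lfun_block_score _ _) (Lfun_cst _ _ _) _ => w.
apply: le_trans (optscore_le_size M_ge0 S_le j (words_over_word id _ _ w)) _.
by rewrite size_map size_iota addKn.
Qed.

Lemma mean_scoreD c c' : mean_score c + mean_score c' <= mean_score (fun j => c j + c' j)%N.
Proof.
have L : block_score (fun _ => 0%N) c \+ block_score c c' \in Lfun P 1.
  by apply: rpredD; exact: Lfun_block_score.
have := fine_expectation_le L (Lfun_block_score (fun _ => 0%N) (fun j => c j + c' j)%N).
rewrite expectationD ?Lfun_block_score // !expectation_block_score; apply => w /=.
have := optscore_cat m_gt0 M_ge0 S_le (words_over_word id (fun _ => 0%N) (fun j => 0 + c j)%N w)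
   (words_over_word id c (fun j => c j + c' j)%N w).
congr (_ <= optscore _ _); apply: funext => j.
by rewrite !add0n word_cat // leq_addr.
Qed.

Lemma le_mean_score c c' : (forall j, c j <= c' j)%N -> mean_score c <= mean_score c'.
Proof.
move=> cc'; have := mean_scoreD c (fun j => c' j - c j)%N.
rewrite (_ : (fun j => c j + (c' j - c j))%N = c'); last by apply: funext => j; rewrite subnKC.
by apply: le_trans; rewrite lerDl mean_score_ge0.
Qed.

Lemma mean_score_eq0 c j : c j = 0%N -> mean_score c = 0.
Proof.
move=> cj0; apply/le_anti; rewrite mean_score_ge0 andbT.
by have := mean_score_le_size c j; rewrite cj0 mul0r.
Qed.

Lemma mean_score_sum (cs : seq ('I_m -> nat)) :
  \sum_(c <- cs) mean_score c <= mean_score (fun j => \sum_(c <- cs) c j)%N.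
Proof.
elim: cs => [|c cs IH]; first by rewrite big_nil mean_score_ge0.
rewrite big_cons; apply: le_trans (lerD (lexx _) IH) _.
by apply: le_trans (mean_scoreD _ _) _; apply: le_mean_score => j; rewrite big_cons.
Qed.

Definition rot_ord (k j : 'I_m) : 'I_m := Ordinal (ltn_pmod (j + k) m_gt0).

Lemma rot_ord_inj k : injective (rot_ord k).
Proof.
move=> x y /(congr1 val) /= /eqP; rewrite eqn_modDr !modn_small // => /eqP e.
exact: val_inj.
Qed.

Lemma rot_ord_inj_shift j : injective (rot_ord^~ j).
Proof.
move=> x y /(congr1 val) /= /eqP; rewrite eqn_modDl !modn_small // => /eqP e.
exact: val_inj.
Qed.

(* Superadditivity summed over the [m] cyclic rotations of [c], which all have
   the mean score of [c]. *)
Lemma mean_score_rotations c : m%:R * mean_score c <= mean_score (fun _ => \sum_(i < m) c i)%N.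
Proof.
have -> : m%:R * mean_score c =
    \sum_(k <- enum 'I_m) mean_score (fun j => c (perm (@rot_ord_inj k) j)).
  under eq_bigr do rewrite mean_score_perm.
  by rewrite big_enum /= sumr_const card_ord mulr_natl.
rewrite -(big_map (fun k j => c (perm (@rot_ord_inj k) j)) xpredT mean_score).
apply: le_trans (mean_score_sum _) _; apply: le_mean_score => j.
rewrite big_map big_enum [in leqRHS](reindex_inj (@rot_ord_inj_shift j)) /=.
by under eq_bigr do rewrite permE.
Qed.

Lemma Ln_block_score n : Ln X S n = block_score (fun _ => 0%N) (fun _ => n).
Proof. by []. Qed.

Lemma gamma_star_growth_rate :
  growth_rate (fun n => mean_score (fun _ => n)) (gamma_star P X S).
Proof.
have ub n : mean_score (fun _ => n) <= M * n%:R by rewrite mulrC (mean_score_le_size _ i0).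
have [G HG] := fekete (fun n => mean_score_ge0 (fun _ => n))
  (fun n n' => mean_scoreD (fun _ => n) (fun _ => n')) ub.
suff -> : gamma_star P X S = G by [].
apply: cvg_lim => //; rewrite -[G]divr1.
apply: (growth_rate_floor_cvg (f := fun n => mean_score (fun _ => n)) (ltn0Sn 0)
  (fun t => mean_score_ge0 _) HG) => n.
by rewrite divn1 lexx; apply: le_mean_score => _; exact: leqnSn.
Qed.

Definition ceil_lengths (p : 'I_m -> R) (n : nat) (j : 'I_m) : nat :=
  if val j == 0%N then n else ceil_nat (n%:R * p j).

Lemma Lp_block_score p n : Lp X S p n = block_score (fun _ => 0%N) (ceil_lengths p n).
Proof.
apply: funext => w; congr optscore; apply: funext => j.
by rewrite /ceil_lengths; case: ifP.
Qed.

Lemma ceil_lengths_between (c : 'I_m -> nat) n j : (0 < c i0)%N ->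
  ((n %/ c i0) * c j <= ceil_lengths (fun j => (c j)%:R / (c i0)%:R) n j
    <= (n %/ c i0).+1 * c j)%N.
Proof.
move=> v0; set p := fun j => _; set v := c i0; set t := (n %/ v)%N.
have vr0 : 0 < (v%:R : R) by rewrite ltr0n.
have tv : t%:R * v%:R <= n%:R :> R by rewrite -natrM ler_nat leq_trunc_div.
have nlt : n%:R <= (t%:R + 1) * v%:R :> R by rewrite natr1 -natrM ler_nat ltnW // ltn_ceil.
have cj0 : 0 <= ((c j)%:R : R) by rewrite ler0n.
rewrite /ceil_lengths; case: ifP => [/eqP j0 | _].
  have -> : j = i0 by apply: val_inj.
  by rewrite leq_trunc_div ltnW // ltn_ceil.
rewrite leq_ceil_nat /=; last by rewrite /p mulrA ler_pdivlMr // natrM; nra.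
apply: ceil_nat_leq; first by rewrite mulr_ge0 // divr_ge0.
by rewrite /p mulrA ler_pdivrMr // natrM -natr1; nra.
Qed.

Lemma mean_score_scaled_growth_rate c :
  exists G, growth_rate (fun t => mean_score (fun j => t * c j)%N) G.
Proof.
apply: (@fekete _ _ _ _ ((c i0)%:R * M)) => [t | t t' | t].
- exact: mean_score_ge0.
- by apply: le_trans (mean_scoreD _ _) _; apply: le_mean_score => j; rewrite mulnDl.
- by apply: le_trans (mean_score_le_size _ i0) _; rewrite natrM; lra.
Qed.

Lemma mean_score_le_gamma_p c : (0 < c i0)%N ->
  m%:R * mean_score c / (\sum_(j < m) c j)%:R <=
  gamma_p P X S (fun j => (c j)%:R / (c i0)%:R).
Proof.
move=> v0; set v := c i0; set p := fun j => (c j)%:R / v%:R.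
have vr0 : 0 < (v%:R : R) by rewrite ltr0n.
have [G HG] := mean_score_scaled_growth_rate c.
have cG : mean_score c <= G.
  by case: HG => /(_ 1%N); rewrite mulr1; under eq_fun do rewrite mul1n.
set K := 1 + \sum_(j < m | (0 < val j)%N) p j.
have K0 : 0 < K by rewrite ltr_pwDl // sumr_ge0 // => j _; rewrite divr_ge0.
have vK : v%:R * K = (\sum_(j < m) c j)%:R.
  rewrite natr_sum (bigD1 i0) //= mulrDr mulr1 mulr_sumr; congr (_ + _).
  apply: eq_big => [j|j _]; last by rewrite /p mulrC divfK // gt_eqF.
  by rewrite -val_eqE /= lt0n.
have -> : gamma_p P X S p = m%:R / K * (G / v%:R).
  apply: cvg_lim => //.
  have -> : (fun n : nat => m%:R * fine 'E_P[Lp X S p n] / (n%:R * K)) =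
      cst (m%:R / K) \* (fun n => mean_score (ceil_lengths p n) / n%:R).
    by apply: funext => n; rewrite Lp_block_score /mean_score /= invfM; ring.
  apply: cvgM; first exact: cvg_cst.
  apply: (growth_rate_floor_cvg v0 (fun t => mean_score_ge0 _) HG) => n.
  by apply/andP; split; apply: le_mean_score => j; case/andP: (ceil_lengths_between n j v0).
rewrite -vK ler_pdivrMr ?mulr_gt0 //; apply: le_trans (ler_wpM2l (ler0n _ m) cG) _.
by rewrite le_eqVlt; apply/orP; left; apply/eqP; field; rewrite !gt_eqF.
Qed.

Lemma mean_score_le_gamma_star c :
  m%:R * mean_score c <= gamma_star P X S * (\sum_(j < m) c j)%:R.
Proof. by apply: le_trans (mean_score_rotations c) _; case: gamma_star_growth_rate. Qed.

Section Blocks.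
Variables (v : nat) (r : 'I_m -> nat -> nat).

Definition block_starts (k : nat) (j : 'I_m) : nat := if val j == 0%N then v * k else r j k.
Definition block_lengths (k : nat) (j : 'I_m) : nat :=
  if val j == 0%N then v else (r j k.+1 - r j k)%N.

Definition balanced_block (p1 p2 : 'I_m -> R) (k : nat) : bool :=
  [forall j : 'I_m, (0 < val j)%N ==>
     ((v%:R * p1 j <= (r j k.+1)%:R - (r j k)%:R) &&
      ((r j k.+1)%:R - (r j k)%:R <= v%:R * p2 j))].

Variables (n d : nat).
Hypothesis r_valid : valid_r n d r.

Lemma r_step j k : (0 < val j)%N -> (k < d)%N -> (r j k <= r j k.+1)%N.
Proof. by move=> j0 kd; case: (r_valid j0) => _ _; apply. Qed.

Lemma Lr_block_scores : Lr X S v d r =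
  fun w => \sum_(k < d) block_score (block_starts k) (block_lengths k) w.
Proof.
apply: funext => w; apply: eq_bigr => k _; congr optscore; apply: funext => j.
rewrite /block_starts /block_lengths; case: ifP => j0; first by rewrite mulnSr.
by rewrite subnKC // r_step // lt0n j0.
Qed.

Lemma sum_block_lengths j : n = (v * d)%N -> (\sum_(k < d) block_lengths k j)%N = n.
Proof.
move=> nvd; case: (boolP (val j == 0%N)) => j0; under eq_bigr do rewrite /block_lengths.
  by under eq_bigr do rewrite j0; rewrite sum_nat_const card_ord nvd mulnC.
under eq_bigr do rewrite (negbTE j0); rewrite -lt0n in j0.
rewrite -(big_mkord xpredT (fun k => r j k.+1 - r j k)%N).
rewrite telescope_sumn_in // => [|k /andP [_ kd]]; last exact: r_step.
by case: (r_valid j0) => -> -> _; rewrite subn0.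
Qed.

Lemma block_lengths_ge k : (v <= \sum_(j < m) block_lengths k j)%N.
Proof. by rewrite (bigD1 i0) //= leq_addr. Qed.

Lemma unbalanced_block_lengths (p1 p2 : 'I_m -> R) k : (k < d)%N ->
  ~~ balanced_block p1 p2 k -> (0 < v)%N ->
  exists2 j : 'I_m, (0 < val j)%N &
    ~ (p1 j <= (block_lengths k j)%:R / (block_lengths k i0)%:R <= p2 j).
Proof.
move=> kd /forallPn [j]; rewrite negb_imply => /andP [j0 /negP nb] v0; exists j => //.
have vr0 : 0 < (v%:R : R) by rewrite ltr0n.
have jn0 : val j != 0%N by rewrite -lt0n.
rewrite /block_lengths /= (negbTE jn0) natrB ?r_step // => /andP [h1 h2].
rewrite ler_pdivlMr // in h1; rewrite ler_pdivrMr // in h2.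
by apply: nb; rewrite !(mulrC v%:R) h1 h2.
Qed.

Lemma unbalanced_blocks_length_ge (eps : R) (p1 p2 : 'I_m -> R) :
  (count (balanced_block p1 p2) (iota 0 d))%:R < (1 - eps) * d%:R ->
  eps * (v * d)%:R <=
    \sum_(k < d | ~~ balanced_block p1 p2 k) (\sum_(j < m) block_lengths k j)%:R.
Proof.
move=> cnt; set B := balanced_block p1 p2.
have cntE : (count B (iota 0 d))%:R = \sum_(k < d | B k) (1 : R).
  rewrite -sum1_count natr_sum (_ : iota 0 d = index_iota 0 d) ?big_mkord //.
  by rewrite /index_iota subn0.
have dsum : \sum_(k < d | B k) (1 : R) + \sum_(k < d | ~~ B k) 1 = d%:R.
  have -> : (d%:R : R) = \sum_(k < d) (1 : R) by rewrite sumr_const card_ord.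
  by rewrite [RHS](bigID (fun k : 'I_d => B k)).
apply: le_trans (_ : v%:R * \sum_(k < d | ~~ B k) (1 : R) <= _).
  by rewrite natrM; have : 0 <= (v%:R : R) by []; nra.
by rewrite mulr_sumr; apply: ler_sum => k _; rewrite mulr1 ler_nat block_lengths_ge.
Qed.

End Blocks.

Lemma mean_score_unbalanced_le (delta : R) (p1 p2 : 'I_m -> R) c j :
  0 <= delta ->
  (forall p : 'I_m -> R, (forall j : 'I_m, (0 < val j)%N -> 0 < p j) ->
      (exists j : 'I_m, (0 < val j)%N /\ ~ (p1 j <= p j <= p2 j)) ->
      gamma_p P X S p <= delta) ->
  (0 < c i0)%N -> (0 < val j)%N -> ~ (p1 j <= (c j)%:R / (c i0)%:R <= p2 j) ->
  m%:R * mean_score c <= delta * (\sum_(j < m) c j)%:R.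
Proof.
move=> delta0 gamma_p_le c0 j0 cj.
case: (boolP [exists j', (0 < val j')%N && (c j' == 0%N)]) => [|/existsPn cpos].
  by case/existsP => j' /andP [_ /eqP /mean_score_eq0 ->]; rewrite mulr0 mulr_ge0.
have sum_gt0 : 0 < ((\sum_(j < m) c j)%:R : R).
  by rewrite ltr0n (leq_trans c0) // (bigD1 i0) //= leq_addr.
rewrite -ler_pdivrMr //; apply: le_trans (mean_score_le_gamma_p c0) _.
apply: gamma_p_le; last by exists j.
move=> j' j'0; rewrite divr_gt0 // ltr0n // lt0n.
by have := cpos j'; rewrite j'0.
Qed.

Lemma expectation_block_scoresB (d : nat) (a c : nat -> 'I_m -> nat) (c0 : 'I_m -> nat) :
  ('E_P[(fun w => \sum_(k < d) block_score (a k) (c k) w - block_score (fun _ => 0%N) c0 w)%R] =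
    (\sum_(k < d) mean_score (c k) - mean_score c0)%:E)%E.
Proof.
set fs := [seq block_score (a k) (c k) | k : 'I_d <- index_enum 'I_d].
have Lfs f : f \in fs -> f \in Lfun P 1 by case/mapP => k _ ->; exact: Lfun_block_score.
have -> : (fun w => \sum_(k < d) block_score (a k) (c k) w - block_score (fun _ => 0%N) c0 w) =
    (\sum_(f <- fs) f) \- block_score (fun _ => 0%N) c0.
  by apply: funext => w; rewrite big_map fct_sumE.
rewrite expectationB; last 2 first.
- by rewrite big_seq; apply: rpred_sum => f; exact: Lfs.
- exact: Lfun_block_score.
rewrite expectation_sum // big_map expectation_block_score.
under eq_bigr do rewrite expectation_block_score.
by rewrite EFinB -sumEFin.
Qed.

Lemma sum_mean_score_blocks_le (eps delta : R) (p1 p2 : 'I_m -> R) n v d r :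
  0 <= delta -> delta <= gamma_star P X S ->
  (forall p : 'I_m -> R, (forall j : 'I_m, (0 < val j)%N -> 0 < p j) ->
      (exists j : 'I_m, (0 < val j)%N /\ ~ (p1 j <= p j <= p2 j)) ->
      gamma_p P X S p <= delta) ->
  (0 < v)%N -> n = (v * d)%N -> in_Rbar n v d eps p1 p2 r ->
  m%:R * \sum_(k < d) mean_score (block_lengths v r k) <=
  gamma_star P X S * (m%:R * n%:R) - (gamma_star P X S - delta) * (eps * n%:R).
Proof.
move=> delta0 deltaG gamma_p_le v0 nvd [r_valid cnt].
set t := fun k : 'I_d => ((\sum_(j < m) block_lengths v r k j)%:R : R).
have total : \sum_(k < d) t k = m%:R * n%:R.
  rewrite /t; under eq_bigr do rewrite natr_sum; rewrite exchange_big /=.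
  under eq_bigr do rewrite -natr_sum (sum_block_lengths r_valid _ nvd).
  by rewrite sumr_const card_ord mulr_natl.
have unbalanced := unbalanced_blocks_length_ge cnt; rewrite -nvd in unbalanced.
rewrite mulr_sumr; apply: le_trans (ler_sum_two_rates
  (B := fun k : 'I_d => ~~ balanced_block v r p1 p2 k) (t := t) _ _) _ => [k|k bk|].
- exact: mean_score_le_gamma_star.
- have [j j0 hj] := unbalanced_block_lengths r_valid (ltn_ord k) bk v0.
  exact: mean_score_unbalanced_le delta0 gamma_p_le _ j0 hj.
by rewrite total lerB // ler_wpM2l ?subr_ge0.
Qed.

End MeanScore.
End RandomWords.

Theorem lemma3p2 (R : realType) (dT : measure_display) (T : measurableType dT)
  (P : probability T R) (m : nat) (A : seq R) (X : 'I_m -> nat -> T -> R)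
  (S : ('I_m -> R) -> R) (D eps delta eta : R) (p1 p2 : 'I_m -> R) :
  (1 < m)%N ->
  (* X^{(j)}_i are random variables with values in the finite alphabet A *)
  (forall j i, measurable_fun setT (X j i)) ->
  (forall j i w, X j i w \in A) ->
  (* independent and identically distributed *)
  mutual_indep P (fun ji : 'I_m * nat => X ji.1 ji.2) ->
  (forall j i j' i' (B : set R), measurable B ->
      P (X j i @^-1` B) = P (X j' i' @^-1` B)) ->
  (* S : A^m -> [0, oo) *)
  (forall x, inA A x -> 0 <= S x) ->
  (exists x, inA A x /\ S x != 0) ->
  (forall (s : {perm 'I_m}) x, inA A x -> S (fun j => x (s j)) = S x) ->
  (exists M : R, forall x, inA A x -> S x <= M) ->
  0 < D ->
  (forall x y, inA A x -> inA A y -> differ_le1 x y -> `|S x - S y| <= D) ->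
  0 < eps ->
  0 < delta < gamma_star P X S ->
  (forall j : 'I_m, (0 < val j)%N -> 0 < p1 j < 1 /\ 1 < p2 j) ->
  (forall p : 'I_m -> R, (forall j : 'I_m, (0 < val j)%N -> 0 < p j) ->
      (exists j : 'I_m, (0 < val j)%N /\ ~ (p1 j <= p j <= p2 j)) ->
      gamma_p P X S p <= delta) ->
  0 < eta < gamma_star P X S - delta ->
  exists N : nat, forall n : nat, (N <= n)%N ->
    forall v d : nat, (0 < v)%N -> (0 < d)%N -> n = (v * d)%N ->
    forall r : 'I_m -> nat -> nat, in_Rbar n v d eps p1 p2 r ->
    ('E_P[(fun w => Lr X S v d r w - Ln X S n w)%R]
       <= (- (eta * eps * n%:R / m%:R))%R%:E)%E.
Proof.
move=> m_gt1 X_meas X_A X_indep X_ident _ _ S_perm [M S_le] _ _ eps_gt0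
  /andP [delta_gt0 delta_lt] _ gamma_p_le /andP [eta_gt0 eta_lt].
have m_gt0 : (0 < m)%N := ltnW m_gt1.
have m_pos : 0 < (m%:R : R) by rewrite ltr0n.
have M_ge0 : 0 <= Num.max M 0 by rewrite le_max lexx orbT.
have S_le' x : inA A x -> S x <= Num.max M 0 by move=> xA; rewrite le_max S_le.
have [_ Ln_ge] := gamma_star_growth_rate m_gt0 X_meas X_A X_indep X_ident M_ge0 S_le'.
set G := gamma_star P X S in delta_lt eta_lt Ln_ge.
set xi := (G - delta - eta) * eps / m%:R.
have xi_gt0 : 0 < xi by rewrite divr_gt0 ?mulr_gt0 // subr_gt0.
have xi_m : xi * m%:R = (G - delta - eta) * eps by rewrite divfK ?gt_eqF.
have [N Ln_ge_N] := Ln_ge _ xi_gt0.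
exists N => n Nn v d v_gt0 _ nvd r r_Rbar.
have blocks_le := sum_mean_score_blocks_le m_gt0 X_meas X_A X_indep X_ident M_ge0 S_le' S_perm
  (ltW delta_gt0) (ltW delta_lt) gamma_p_le v_gt0 nvd r_Rbar.
rewrite -/G in blocks_le.
rewrite (Lr_block_scores X S v r_Rbar.1) Ln_block_score.
rewrite (expectation_block_scoresB m_gt0 X_meas X_A X_indep X_ident) lee_fin.
rewrite -(ler_pM2r m_pos) mulNr divfK ?gt_eqF //.
have := ler_wpM2r (ltW m_pos) (Ln_ge_N n Nn).
have : xi * n%:R * m%:R = (G - delta - eta) * eps * n%:R by rewrite mulrAC xi_m.
lra.
Qed.
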